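(* Define $f:\mathfrak E_{\mathrm c}\to (\{0\}\cup\{1/n:n=1,2,3,\dots\})^\omega\times[0,1]$ by $f(x)=\big\langle x,\tfrac{1+\sin\|x\|}{2}\big\rangle$, where the codomain carries the product topology. Then $f$ is a continuous injection and $Y=f(\mathfrak E_{\mathrm c})$ is totally disconnected and cohesive but not almost zero-dimensional.
   Context: $\ell^2$ is the Hilbert space of square-summable real sequences with norm $\|\cdot\|$; complete Erdős space is $\mathfrak E_{\mathrm c}=\{x\in\ell^2: x_i\in\{0\}\cup\{1/n:n\geq 1\}\text{ for each } i<\omega\}$ with the norm topology. A subset $A$ of a space $X$ is a C-set in $X$ if it is an intersection of clopen subsets of $X$. $X$ is totally disconnected if every singleton is a C-set. $X$ is almost zero-dimensional if every point has a neighborhood basis consisting of C-sets in $X$. $X$ is cohesive if every point has a neighborhood containing no non-empty clopen subset of $X$. *)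

From Stdlib Require Import Reals Lra ClassicalEpsilon.
Open Scope R_scope.

(** * Generic (subspace-style) topology vocabulary.
    A space is given by a carrier [A : X -> Prop] and a predicate [O] on
    subsets of X describing its open sets (all of which are subsets of A). *)

Definition subset {X} (U V : X -> Prop) := forall x, U x -> V x.

Definition sub_open {X} (O : (X -> Prop) -> Prop) (B : X -> Prop)
  (V : X -> Prop) : Prop :=
  subset V B /\ exists W, O W /\ forall x, V x <-> (B x /\ W x).

Definition clopen {X} (A : X -> Prop) (O : (X -> Prop) -> Prop) (C : X -> Prop) :=
  O C /\ O (fun x => A x /\ ~ C x).

(* C-set: an intersection of clopen subsets of the space (the empty
   intersection being A itself) *)
Definition Cset {X} (A : X -> Prop) (O : (X -> Prop) -> Prop) (S : X -> Prop) :=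
  exists F : (X -> Prop) -> Prop,
    (forall C, F C -> clopen A O C) /\
    (forall x, S x <-> (A x /\ forall C, F C -> C x)).

Definition neighborhood {X} (A : X -> Prop) (O : (X -> Prop) -> Prop)
  (x : X) (N : X -> Prop) :=
  subset N A /\ exists U, O U /\ U x /\ subset U N.

Definition totally_disconnected {X} (A : X -> Prop) (O : (X -> Prop) -> Prop) :=
  forall x, A x -> Cset A O (fun y => y = x).

Definition almost_zero_dimensional {X} (A : X -> Prop) (O : (X -> Prop) -> Prop) :=
  forall x, A x -> forall U, O U -> U x ->
    exists N, neighborhood A O x N /\ Cset A O N /\ subset N U.

Definition cohesive {X} (A : X -> Prop) (O : (X -> Prop) -> Prop) :=
  forall x, A x -> exists N, neighborhood A O x N /\
    forall C, clopen A O C -> (exists y, C y) -> ~ subset C N.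

Definition continuous_on {X Y} (A : X -> Prop) (OA : (X -> Prop) -> Prop)
  (OB : (Y -> Prop) -> Prop) (f : X -> Y) :=
  forall W, OB W -> OA (fun x => A x /\ W (f x)).

Definition Sset (r : R) : Prop :=
  r = 0 \/ exists n : nat, (1 <= n)%nat /\ r = 1 / INR n.

Definition sqsummable (x : nat -> R) : Prop :=
  exists s, infinite_sum (fun i => (x i) ^ 2) s.

(* sum of squares (meaningful when [sqsummable x]) *)
Definition sqnorm (x : nat -> R) : R :=
  epsilon (inhabits 0) (fun s => infinite_sum (fun i => (x i) ^ 2) s).

Definition l2norm (x : nat -> R) : R := sqrt (sqnorm x).

Definition l2dist (x y : nat -> R) : R := l2norm (fun i => x i - y i).

Definition Ec (x : nat -> R) : Prop := (forall i, Sset (x i)) /\ sqsummable x.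

Definition Ec_open (U : (nat -> R) -> Prop) : Prop :=
  subset U Ec /\
  forall x, U x -> exists eps, 0 < eps /\
    forall y, Ec y -> l2dist x y < eps -> U y.

Definition Pcar (p : (nat -> R) * R) : Prop :=
  (forall i, Sset (fst p i)) /\ 0 <= snd p <= 1.

(* product topology: basic neighbourhoods restrict finitely many coordinates *)
Definition P_open (W : (nat -> R) * R -> Prop) : Prop :=
  subset W Pcar /\
  forall p, W p -> exists (n : nat) (eps : R), 0 < eps /\
    forall q, Pcar q ->
      (forall i, (i < n)%nat -> Rabs (fst q i - fst p i) < eps) ->
      Rabs (snd q - snd p) < eps -> W q.

Definition fmap (x : nat -> R) : (nat -> R) * R :=
  (x, (1 + sin (l2norm x)) / 2).

Definition Yset (p : (nat -> R) * R) : Prop := exists x, Ec x /\ fmap x = p.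

Definition Y_open := sub_open P_open Yset.

From Stdlib Require Import Reals Lra Lia Classical ClassicalEpsilon FunctionalExtensionality.
Open Scope R_scope.

(* f is continuous since the norm is 1-Lipschitz and coordinates are dominated by the norm, and
   injective since its first component is the identity.  Because S is discrete away from 0, the
   sets {q | q_i < 1/m} are clopen in S^omega; they separate points, so Y is totally disconnected.

   The heart of the matter is an Erdos-type lemma: if V is clopen in the closed subspace of E_c of
   points vanishing on the first n coordinates and x is in V, then V contains points of every norm
   T > |x|.  Otherwise, truncate x and append, one coordinate at a time, the value 1/N with N least
   such that the point stays in V and within the ball of radius T.  The limit lies in V
   since V is closed.  If its norm were below T, then for large k the choice 1/(N_k - 1) would have
   been admissible too: V is open at the limit, |1/N_k - 1/(N_k - 1)| <= 2/N_k -> 0, and the gap to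
   the sphere stays bounded below.

   Hence every nonempty clopen subset of Y contains points with second coordinate
   (1 + sin |x|)/2 equal to 0 and to 1, so Y is cohesive.  A C-set neighbourhood N of f(0)
   contains f(z) for all z vanishing on the first n coordinates with sin |z| = 0, in particular on
   the sphere of radius pi; pushing each clopen set of the intersection out to that sphere shows
   that N contains f(y) whenever |y| < pi, including points with second coordinate 1.  So N is
   not contained in the open set {t < 1} around f(0). *)

(* [psum a m] adds the first [m] terms, whereas [sum_f_R0 a n] adds [n + 1]. *)
Fixpoint psum (a : nat -> R) (m : nat) : R :=
  match m with O => 0 | S k => psum a k + a k end.

Lemma psum_le a b m : (forall i, a i <= b i) -> psum a m <= psum b m.
Proof. intros H; induction m; simpl; [lra|]. specialize (H m); lra. Qed.

Lemma psum_ext a b m : (forall i, (i < m)%nat -> a i = b i) -> psum a m = psum b m.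
Proof.
  induction m; intros H; simpl; [lra|].
  rewrite IHm by (intros; apply H; lia). rewrite (H m) by lia; lra.
Qed.

Lemma psum_plus a b m : psum (fun i => a i + b i) m = psum a m + psum b m.
Proof. induction m; simpl; lra. Qed.

Lemma psum_scal c a m : psum (fun i => c * a i) m = c * psum a m.
Proof. induction m; simpl; lra. Qed.

Lemma psum_growing a : (forall i, 0 <= a i) -> Un_growing (psum a).
Proof. intros H m; simpl; specialize (H m); lra. Qed.

Lemma psum_incr a m1 m2 : (forall i, 0 <= a i) -> (m1 <= m2)%nat -> psum a m1 <= psum a m2.
Proof. intros H Hm; induction Hm; simpl; [lra|]. specialize (H m); lra. Qed.

Definition is_sum (a : nat -> R) (l : R) : Prop := Un_cv (psum a) l.

Lemma Un_cv_const c : Un_cv (fun _ => c) c.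
Proof. intros eps He; exists O; intros; rewrite R_dist_eq; lra. Qed.

Lemma is_sum_infinite_sum a l : is_sum a l <-> infinite_sum a l.
Proof.
  assert (E : forall n, sum_f_R0 a n = psum a (n + 1)).
  { induction n; simpl; [lra|]. rewrite IHn; replace (n + 1)%nat with (S n) by lia; simpl; lra. }
  split; intros H.
  - apply (Un_cv_ext (fun n => psum a (n + 1))); [intros; symmetry; apply E|].
    apply CV_shift'; exact H.
  - apply (CV_shift _ 1). apply (Un_cv_ext (sum_f_R0 a)); [exact E|exact H].
Qed.

Lemma is_sum_unique a l1 l2 : is_sum a l1 -> is_sum a l2 -> l1 = l2.
Proof. apply UL_sequence. Qed.

Lemma is_sum_ext a b l : (forall i, a i = b i) -> is_sum a l -> is_sum b l.
Proof.
  intros E; replace b with a by (apply functional_extensionality; auto); auto.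
Qed.

Lemma is_sum_plus a b la lb : is_sum a la -> is_sum b lb -> is_sum (fun i => a i + b i) (la + lb).
Proof.
  intros Ha Hb. eapply Un_cv_ext; [|apply (CV_plus _ _ _ _ Ha Hb)].
  intros; symmetry; apply psum_plus.
Qed.

Lemma is_sum_scal c a l : is_sum a l -> is_sum (fun i => c * a i) (c * l).
Proof.
  intros Ha. eapply Un_cv_ext; [|apply (CV_mult _ _ _ _ (Un_cv_const c) Ha)].
  intros; symmetry; apply psum_scal.
Qed.

Lemma is_sum_le a b la lb : (forall i, a i <= b i) -> is_sum a la -> is_sum b lb -> la <= lb.
Proof. intros H; apply Rle_cv_lim; intros; apply psum_le; auto. Qed.

Lemma is_sum_le_bound a l B : is_sum a l -> (forall m, psum a m <= B) -> l <= B.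
Proof. intros Ha HB; exact (Rle_cv_lim HB Ha (Un_cv_const B)). Qed.

Lemma psum_le_is_sum a l m : (forall i, 0 <= a i) -> is_sum a l -> psum a m <= l.
Proof. intros H Ha; exact (growing_ineq _ _ (psum_growing a H) Ha m). Qed.

Lemma is_sum_term_le a l i : (forall j, 0 <= a j) -> is_sum a l -> a i <= l.
Proof.
  intros H Ha. apply Rle_trans with (psum a (S i)); [|apply psum_le_is_sum; auto].
  simpl. pose proof (psum_incr a 0 i H ltac:(lia)); simpl in *; lra.
Qed.

Lemma is_sum_finite_support a m : (forall i, (m <= i)%nat -> a i = 0) -> is_sum a (psum a m).
Proof.
  intros H. apply (CV_shift _ m). apply (Un_cv_ext (fun _ => psum a m)); [|apply Un_cv_const].
  intros k; induction k; simpl; [f_equal; lia|]. rewrite IHk, H by lia. lra.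
Qed.

Lemma is_sum_of_bounded a B : (forall i, 0 <= a i) -> (forall m, psum a m <= B) ->
  exists l, is_sum a l.
Proof.
  intros H HB. destruct (growing_cv (psum a) (psum_growing a H)) as [l Hl].
  - exists B; intros x [m ->]; auto.
  - exists l; exact Hl.
Qed.

Lemma is_sum_comparison a b lb : (forall i, 0 <= a i <= b i) -> is_sum b lb ->
  exists la, is_sum a la.
Proof.
  intros H Hb. apply (is_sum_of_bounded a lb); [intros i; apply H|].
  intros m. apply Rle_trans with (psum b m); [apply psum_le; intros; apply H|].
  apply psum_le_is_sum; auto. intros i; specialize (H i); lra.
Qed.

Lemma is_sum_cv0 a l : is_sum a l -> Un_cv a 0.
Proof.
  intros Ha. replace 0 with (l - l) by ring.
  apply (Un_cv_ext (fun n => psum a (n + 1) - psum a n)).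
  - intros n; replace (n + 1)%nat with (S n) by lia; simpl; ring.
  - apply CV_minus; [apply CV_shift'|]; exact Ha.
Qed.

Lemma sqsummable_is_sum x : sqsummable x <-> exists s, is_sum (fun i => x i ^ 2) s.
Proof. split; intros [s H]; exists s; apply is_sum_infinite_sum; auto. Qed.

Lemma sqnorm_is_sum x : sqsummable x -> is_sum (fun i => x i ^ 2) (sqnorm x).
Proof. intros H. apply is_sum_infinite_sum. unfold sqnorm. apply epsilon_spec, H. Qed.

Lemma sqnorm_unique x s : is_sum (fun i => x i ^ 2) s -> sqnorm x = s.
Proof.
  intros H. eapply is_sum_unique; [|exact H].
  apply sqnorm_is_sum, sqsummable_is_sum; eauto.
Qed.

Lemma sqnorm_nonneg x : sqsummable x -> 0 <= sqnorm x.
Proof.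
  intros H. apply (psum_le_is_sum (fun i => x i ^ 2) _ 0); [intros; apply pow2_ge_0|].
  apply sqnorm_is_sum, H.
Qed.

Lemma sqnorm_ext x y : (forall i, x i ^ 2 = y i ^ 2) -> sqnorm x = sqnorm y.
Proof.
  intros H. unfold sqnorm.
  replace (fun i => x i ^ 2) with (fun i => y i ^ 2) by (apply functional_extensionality; auto).
  reflexivity.
Qed.

Lemma l2norm_ext x y : (forall i, x i ^ 2 = y i ^ 2) -> l2norm x = l2norm y.
Proof. intros H; unfold l2norm; rewrite (sqnorm_ext x y H); auto. Qed.

Lemma sqsummable_lincomb x y a b : sqsummable x -> sqsummable y ->
  sqsummable (fun i => a * x i + b * y i).
Proof.
  intros Hx Hy. apply sqsummable_is_sum.
  eapply is_sum_comparison;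
    [|exact (is_sum_plus _ _ _ _ (is_sum_scal (2 * a ^ 2) _ _ (sqnorm_is_sum x Hx))
                                 (is_sum_scal (2 * b ^ 2) _ _ (sqnorm_is_sum y Hy)))].
  intros i; split; [apply pow2_ge_0|].
  pose proof (pow2_ge_0 (a * x i - b * y i)). simpl in *; nra.
Qed.

(* The optimal [t] is [sqrt b / sqrt a]; shifting both by [d > 0] avoids a division by zero. *)
Lemma le_sqr_sqrt_plus A a b : 0 <= a -> 0 <= b ->
  (forall t, 0 < t -> A <= (1 + t) * a + (1 + / t) * b) -> A <= (sqrt a + sqrt b) ^ 2.
Proof.
  intros Ha Hb H. rewrite <- (sqrt_sqrt a Ha), <- (sqrt_sqrt b Hb) in H.
  pose proof (sqrt_pos a); pose proof (sqrt_pos b).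
  set (sa := sqrt a) in *; set (sb := sqrt b) in *; set (s := sa + sb).
  apply Rnot_lt_le; intros Hlt.
  set (d := (A - s ^ 2) / (4 * s + 4)).
  assert (Hd : 0 < d) by (unfold d; apply Rdiv_lt_0_compat; unfold s in *; lra).
  assert (Hds : 2 * d * s <= (A - s ^ 2) / 2).
  { unfold d. apply (Rmult_le_reg_r (4 * s + 4)); [unfold s in *; lra|].
    field_simplify; [|unfold s in *; lra]. unfold s in *; nra. }
  specialize (H ((sb + d) / (sa + d)) ltac:(apply Rdiv_lt_0_compat; lra)).
  assert (Ea : (1 + (sb + d) / (sa + d)) * (sa * sa) * (sa + d) = (s + 2 * d) * (sa * sa))
    by (unfold s; field; lra).
  assert (Eb : (1 + / ((sb + d) / (sa + d))) * (sb * sb) * (sb + d) = (s + 2 * d) * (sb * sb))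
    by (unfold s; field; lra).
  assert (Ha' : (1 + (sb + d) / (sa + d)) * (sa * sa) <= (s + 2 * d) * sa).
  { apply (Rmult_le_reg_r (sa + d)); [lra|]. rewrite Ea.
    assert (0 <= (s + 2 * d) * sa * d)
      by (apply Rmult_le_pos; [apply Rmult_le_pos|]; unfold s in *; lra).
    replace ((s + 2 * d) * sa * (sa + d)) with ((s + 2 * d) * (sa * sa) + (s + 2 * d) * sa * d) by ring.
    lra. }
  assert (Hb' : (1 + / ((sb + d) / (sa + d))) * (sb * sb) <= (s + 2 * d) * sb).
  { apply (Rmult_le_reg_r (sb + d)); [lra|]. rewrite Eb.
    assert (0 <= (s + 2 * d) * sb * d)
      by (apply Rmult_le_pos; [apply Rmult_le_pos|]; unfold s in *; lra).
    replace ((s + 2 * d) * sb * (sb + d)) with ((s + 2 * d) * (sb * sb) + (s + 2 * d) * sb * d) by ring.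
    lra. }
  assert (A <= (s + 2 * d) * s).
  { replace ((s + 2 * d) * s) with ((s + 2 * d) * sa + (s + 2 * d) * sb) by (unfold s; ring).
    lra. }
  replace ((s + 2 * d) * s) with (s ^ 2 + 2 * d * s) in H2 by ring. lra.
Qed.

Lemma sqsummable_plus x y : sqsummable x -> sqsummable y -> sqsummable (fun i => x i + y i).
Proof.
  intros Hx Hy. replace (fun i => x i + y i) with (fun i => 1 * x i + 1 * y i)
    by (apply functional_extensionality; intros; ring).
  apply sqsummable_lincomb; auto.
Qed.

Lemma sqsummable_minus x y : sqsummable x -> sqsummable y -> sqsummable (fun i => x i - y i).
Proof.
  intros Hx Hy. replace (fun i => x i - y i) with (fun i => 1 * x i + -1 * y i)
    by (apply functional_extensionality; intros; ring).
  apply sqsummable_lincomb; auto.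
Qed.

Lemma l2norm_triangle x y : sqsummable x -> sqsummable y ->
  l2norm (fun i => x i + y i) <= l2norm x + l2norm y.
Proof.
  intros Hx Hy. unfold l2norm. pose proof (sqsummable_plus x y Hx Hy) as Hxy.
  pose proof (sqrt_pos (sqnorm x)); pose proof (sqrt_pos (sqnorm y)).
  rewrite <- (sqrt_pow2 (sqrt (sqnorm x) + sqrt (sqnorm y))) by lra.
  apply sqrt_le_1_alt, le_sqr_sqrt_plus; try apply sqnorm_nonneg; auto.
  (* [2 x_i y_i <= t x_i^2 + y_i^2 / t], summed over [i] *)
  intros t Ht.
  eapply is_sum_le; [|apply (sqnorm_is_sum _ Hxy)|];
    [|exact (is_sum_plus _ _ _ _ (is_sum_scal (1 + t) _ _ (sqnorm_is_sum x Hx))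
                                 (is_sum_scal (1 + / t) _ _ (sqnorm_is_sum y Hy)))].
  intros i. pose proof (pow2_ge_0 (t * x i - y i)).
  assert (2 * x i * y i <= t * x i ^ 2 + / t * y i ^ 2).
  { apply (Rmult_le_reg_l t); auto.
    replace (t * (t * x i ^ 2 + / t * y i ^ 2)) with (t * t * x i ^ 2 + y i ^ 2) by (field; lra).
    simpl in *; nra. }
  simpl in *; nra.
Qed.

Lemma l2dist_sym x y : l2dist x y = l2dist y x.
Proof. unfold l2dist; apply l2norm_ext; intros; ring. Qed.

Lemma l2dist_triangle x y z : sqsummable x -> sqsummable y -> sqsummable z ->
  l2dist x z <= l2dist x y + l2dist y z.
Proof.
  intros Hx Hy Hz. unfold l2dist.
  rewrite (l2norm_ext (fun i => x i - z i) (fun i => (x i - y i) + (y i - z i))) by (intros; ring).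
  apply l2norm_triangle; apply sqsummable_minus; auto.
Qed.

Lemma Rabs_l2norm_sub_le x y : sqsummable x -> sqsummable y ->
  Rabs (l2norm x - l2norm y) <= l2dist x y.
Proof.
  intros Hx Hy.
  pose proof (l2norm_triangle (fun i => x i - y i) y (sqsummable_minus x y Hx Hy) Hy) as H1.
  pose proof (l2norm_triangle (fun i => y i - x i) x (sqsummable_minus y x Hy Hx) Hx) as H2.
  rewrite (l2norm_ext _ x) in H1 by (intros; ring).
  rewrite (l2norm_ext _ y) in H2 by (intros; ring).
  fold (l2dist x y) in H1. fold (l2dist y x) in H2. rewrite l2dist_sym in H2.
  apply Rabs_le; lra.
Qed.

Lemma sqrt_pow2_Rabs r : sqrt (r ^ 2) = Rabs r.
Proof. rewrite <- sqrt_Rsqr_abs; f_equal; unfold Rsqr; ring. Qed.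

Lemma Rabs_coord_sub_le x y i : sqsummable x -> sqsummable y -> Rabs (x i - y i) <= l2dist x y.
Proof.
  intros Hx Hy. unfold l2dist, l2norm. rewrite <- sqrt_pow2_Rabs. apply sqrt_le_1_alt.
  apply (is_sum_term_le (fun i => (x i - y i) ^ 2)); [intros; apply pow2_ge_0|].
  apply sqnorm_is_sum, sqsummable_minus; auto.
Qed.

Lemma sqsummable_finite_support x m : (forall i, (m <= i)%nat -> x i = 0) -> sqsummable x.
Proof.
  intros H; apply sqsummable_is_sum; eexists; apply (is_sum_finite_support _ m).
  intros i Hi; rewrite H by auto; ring.
Qed.

Lemma sqnorm_finite_support x m : (forall i, (m <= i)%nat -> x i = 0) ->
  sqnorm x = psum (fun i => x i ^ 2) m.
Proof.
  intros H; apply sqnorm_unique, is_sum_finite_support.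
  intros i Hi; rewrite H by auto; ring.
Qed.

Lemma l2norm_zero : l2norm (fun _ => 0) = 0.
Proof.
  unfold l2norm; rewrite (sqnorm_finite_support _ 0) by auto; apply sqrt_0.
Qed.

Lemma is_sum_single j v : is_sum (fun i => if Nat.eq_dec i j then v else 0) v.
Proof.
  set (a := fun i => if Nat.eq_dec i j then v else 0).
  assert (E : psum a (S j) = v).
  2:{ rewrite <- E. apply is_sum_finite_support.
      intros i Hi; unfold a; destruct (Nat.eq_dec i j); [lia|auto]. }
  simpl. rewrite (psum_ext _ (fun _ => 0)).
  - unfold a; destruct (Nat.eq_dec j j); [|lia]. clear; induction j; simpl; lra.
  - intros i Hi; unfold a; destruct (Nat.eq_dec i j); [lia|auto].
Qed.

Definition upd (x : nat -> R) (j : nat) (c : R) : nat -> R :=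
  fun i => if Nat.eq_dec i j then c else x i.

Lemma upd_id x j : x j = 0 -> upd x j 0 = x.
Proof.
  intros H; apply functional_extensionality; intros i; unfold upd.
  destruct (Nat.eq_dec i j); subst; auto.
Qed.

Lemma sqsummable_upd x j c : sqsummable x -> sqsummable (upd x j c).
Proof.
  intros Hx. apply sqsummable_is_sum.
  eapply is_sum_comparison; [|exact (is_sum_plus _ _ _ _ (sqnorm_is_sum x Hx) (is_sum_single j (c ^ 2)))].
  intros i; unfold upd; destruct (Nat.eq_dec i j); split; try apply pow2_ge_0.
  - pose proof (pow2_ge_0 (x i)); lra.
  - lra.
Qed.

Lemma sqnorm_upd x j c : sqsummable x -> x j = 0 -> sqnorm (upd x j c) = sqnorm x + c ^ 2.
Proof.
  intros Hx Hj. apply sqnorm_unique.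
  eapply is_sum_ext; [|exact (is_sum_plus _ _ _ _ (sqnorm_is_sum x Hx) (is_sum_single j (c ^ 2)))].
  intros i; unfold upd; destruct (Nat.eq_dec i j); [subst; rewrite Hj|]; ring.
Qed.

Lemma l2dist_upd x j a b : l2dist (upd x j a) (upd x j b) = Rabs (a - b).
Proof.
  unfold l2dist, l2norm. rewrite <- sqrt_pow2_Rabs. f_equal. apply sqnorm_unique.
  eapply is_sum_ext; [|exact (is_sum_single j ((a - b) ^ 2))].
  intros i; unfold upd; destruct (Nat.eq_dec i j); ring.
Qed.

Definition trunc (m : nat) (x : nat -> R) : nat -> R :=
  fun i => if Nat.ltb i m then x i else 0.

Lemma trunc_zero m x i : (m <= i)%nat -> trunc m x i = 0.
Proof. intros H; unfold trunc; destruct (Nat.ltb_spec i m); [lia|auto]. Qed.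

Lemma sqnorm_trunc m x : sqnorm (trunc m x) = psum (fun i => x i ^ 2) m.
Proof.
  rewrite (sqnorm_finite_support _ m) by (intros; apply trunc_zero; auto).
  apply psum_ext; intros i Hi; unfold trunc; destruct (Nat.ltb_spec i m); [auto|lia].
Qed.

Lemma sqnorm_trunc_le m x : sqsummable x -> sqnorm (trunc m x) <= sqnorm x.
Proof.
  intros H; rewrite sqnorm_trunc.
  apply psum_le_is_sum; [intros; apply pow2_ge_0|apply sqnorm_is_sum, H].
Qed.

(* [trunc m x - x] has squared norm [sqnorm x - psum (x^2) m], a tail of a convergent series. *)
Lemma trunc_cv x : sqsummable x -> forall eps, 0 < eps -> exists m,
  forall m', (m <= m')%nat -> l2dist (trunc m' x) x < eps.
Proof.
  intros Hx eps He.
  destruct (sqnorm_is_sum x Hx (eps ^ 2)) as [m Hm]; [apply pow_lt; lra|].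
  exists m; intros m' Hm'. specialize (Hm m' Hm'). unfold Rdist in Hm.
  assert (Ht : sqsummable (trunc m' x))
    by (apply (sqsummable_finite_support _ m'); intros; apply trunc_zero; auto).
  set (d := fun i => trunc m' x i - x i).
  assert (Hd : sqnorm d = -1 * sqnorm (trunc m' x) + sqnorm x).
  { apply sqnorm_unique. eapply is_sum_ext;
      [|exact (is_sum_plus _ _ _ _ (is_sum_scal (-1) _ _ (sqnorm_is_sum _ Ht)) (sqnorm_is_sum x Hx))].
    intros i; unfold d, trunc; destruct (Nat.ltb_spec i m'); ring. }
  rewrite sqnorm_trunc in Hd. apply Rabs_def2 in Hm.
  unfold l2dist, l2norm; fold d. rewrite <- (sqrt_pow2 eps) by lra.
  apply sqrt_lt_1_alt; split; [apply sqnorm_nonneg, sqsummable_minus; auto|lra].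
Qed.

Lemma INR_ge1 N : (1 <= N)%nat -> 1 <= INR N.
Proof. intros H; apply le_INR in H; simpl in H; lra. Qed.

Lemma inv_INR_pos N : (1 <= N)%nat -> 0 < 1 / INR N.
Proof. intros H; pose proof (INR_ge1 N H); apply Rdiv_lt_0_compat; lra. Qed.

Lemma inv_INR_le a b : (1 <= a)%nat -> (a <= b)%nat -> 1 / INR b <= 1 / INR a.
Proof.
  intros Ha Hab. pose proof (INR_ge1 _ Ha). apply le_INR in Hab.
  unfold Rdiv; rewrite !Rmult_1_l; apply Rinv_le_contravar; lra.
Qed.

Lemma inv_INR_pred_le N : (2 <= N)%nat -> 1 / INR (N - 1) <= 2 * (1 / INR N).
Proof.
  intros HN. rewrite minus_INR by lia. apply le_INR in HN. simpl in *.
  apply (Rmult_le_reg_r (INR N * (INR N - 1))); [nra|]. field_simplify; lra.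
Qed.

Lemma Sset_inv N : (1 <= N)%nat -> Sset (1 / INR N).
Proof. intros H; right; exists N; auto. Qed.

Lemma Sset_nonneg r : Sset r -> 0 <= r.
Proof. intros [->|[k [Hk ->]]]; [lra|]. left; apply inv_INR_pos, Hk. Qed.

Lemma Sset_eq_of_thresholds a b : Sset a -> Sset b ->
  (forall m, (1 <= m)%nat -> (a < 1 / INR m <-> b < 1 / INR m)) -> a = b.
Proof.
  intros Ha Hb H. pose proof (Sset_nonneg a Ha); pose proof (Sset_nonneg b Hb).
  destruct (Rtotal_order a b) as [Hlt|[Heq|Hgt]]; auto; exfalso.
  - destruct Hb as [E|[k [Hk E]]]; [lra|]. specialize (H k Hk). rewrite <- E in H.
    apply (Rlt_irrefl b), H, Hlt.
  - destruct Ha as [E|[k [Hk E]]]; [lra|]. specialize (H k Hk). rewrite <- E in H.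
    apply (Rlt_irrefl a), H, Hgt.
Qed.

Definition Ec_tail (n : nat) (y : nat -> R) : Prop := Ec y /\ forall i, (i < n)%nat -> y i = 0.

Definition tail_open (n : nat) (U : (nat -> R) -> Prop) : Prop :=
  forall y, U y -> exists eps, 0 < eps /\ forall z, Ec_tail n z -> l2dist y z < eps -> U z.

Definition tail_clopen (n : nat) (V : (nat -> R) -> Prop) : Prop :=
  tail_open n (fun y => Ec_tail n y /\ V y) /\ tail_open n (fun y => Ec_tail n y /\ ~ V y).

Lemma tail_open_ext n U U' : (forall z, U z <-> U' z) -> tail_open n U' -> tail_open n U.
Proof.
  intros E H y Hy. destruct (H y (proj1 (E y) Hy)) as [eps [He Heps]].
  exists eps; split; auto. intros z Hz Hd; apply E; auto.
Qed.

Lemma tail_clopen_not n V : tail_clopen n V -> tail_clopen n (fun z => ~ V z).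
Proof.
  intros [H1 H2]; split; [exact H2|].
  eapply tail_open_ext; [|exact H1]. intros z; split; intros [Hz HV]; split; tauto.
Qed.

Lemma tail_clopen_True n : tail_clopen n (fun _ => True).
Proof.
  split; intros y [Hy HV].
  - exists 1; split; [lra|]. intros; auto.
  - contradiction.
Qed.

Lemma Ec_zero : Ec (fun _ => 0).
Proof. split; [intros; left; auto|apply (sqsummable_finite_support _ 0); auto]. Qed.

Lemma Ec_tail_zero n : Ec_tail n (fun _ => 0).
Proof. split; [apply Ec_zero|auto]. Qed.

Lemma Ec_tail_upd n x j c : Ec_tail n x -> Sset c -> (n <= j)%nat -> Ec_tail n (upd x j c).
Proof.
  intros [[HS Hs] Hz] Hc Hj. split; [split|].
  - intros i; unfold upd; destruct (Nat.eq_dec i j); auto.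
  - apply sqsummable_upd; auto.
  - intros i Hi; unfold upd; destruct (Nat.eq_dec i j); [lia|auto].
Qed.

Lemma Ec_tail_trunc n m x : Ec_tail n x -> Ec_tail n (trunc m x).
Proof.
  intros [[HS Hs] Hz]. split; [split|].
  - intros i; unfold trunc; destruct (Nat.ltb i m); [auto|left; auto].
  - apply (sqsummable_finite_support _ m); intros; apply trunc_zero; auto.
  - intros i Hi; unfold trunc; destruct (Nat.ltb i m); auto.
Qed.

(* Filling the coordinates [K, K + 1, ...] of [x0] greedily produces a point of [U] on the sphere
   of radius [T], contradicting [U_off_sphere]; that hypothesis is also what keeps every stage
   strictly inside the ball. *)
Section Greedy.

Variables (n : nat) (U : (nat -> R) -> Prop) (T : R).
Hypothesis U_tail : forall y, U y -> Ec_tail n y.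
Hypothesis U_open : tail_open n U.
Hypothesis U_closed : tail_open n (fun y => Ec_tail n y /\ ~ U y).
Hypothesis U_off_sphere : forall y, U y -> sqnorm y <> T ^ 2.

Lemma U_sqsummable y : U y -> sqsummable y.
Proof. intros H; apply (U_tail y H). Qed.

Definition admissible (x : nat -> R) (j N : nat) : Prop :=
  (1 <= N)%nat /\ (1 / INR N) ^ 2 <= T ^ 2 - sqnorm x /\ U (upd x j (1 / INR N)).

Definition least_admissible (x : nat -> R) (j N : nat) : Prop :=
  admissible x j N /\ forall M, (M < N)%nat -> ~ admissible x j M.

Lemma admissible_exists x j : U x -> sqnorm x < T ^ 2 -> x j = 0 -> (n <= j)%nat ->
  exists N, admissible x j N.
Proof.
  intros Hx Hlt Hj Hjn. destruct (U_open x Hx) as [eps [He Heps]].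
  destruct (archimed_cor1 (Rmin eps (T ^ 2 - sqnorm x))) as [N [HN HN1]];
    [apply Rmin_glb_lt; lra|].
  pose proof (Rmin_l eps (T ^ 2 - sqnorm x)); pose proof (Rmin_r eps (T ^ 2 - sqnorm x)).
  replace (/ INR N) with (1 / INR N) in HN by (unfold Rdiv; ring).
  pose proof (inv_INR_pos N HN1). pose proof (inv_INR_le 1 N (le_n 1) HN1) as Hle1.
  replace (1 / INR 1) with 1 in Hle1 by (simpl; field).
  exists N; split; [exact HN1|split].
  - simpl; nra.
  - apply Heps.
    + apply Ec_tail_upd; [apply U_tail, Hx|apply Sset_inv, HN1|exact Hjn].
    + rewrite <- (upd_id x j Hj) at 1. rewrite l2dist_upd, Rminus_0_l, Rabs_Ropp.
      rewrite Rabs_right; lra.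
Qed.

Definition next_index (x : nat -> R) (j : nat) : nat :=
  epsilon (inhabits 1%nat) (least_admissible x j).

Lemma next_index_spec x j : U x -> sqnorm x < T ^ 2 -> x j = 0 -> (n <= j)%nat ->
  least_admissible x j (next_index x j).
Proof.
  intros Hx Hlt Hj Hjn. unfold next_index. apply epsilon_spec.
  destruct (Wf_nat.dec_inh_nat_subset_has_unique_least_element (admissible x j))
    as [N [[HN Hmin] _]]; [intros; apply classic|apply admissible_exists; auto|].
  exists N; split; [exact HN|]. intros M HM HaM. specialize (Hmin M HaM); lia.
Qed.

Variables (x0 : nat -> R) (K : nat).
Hypothesis x0_in : U x0.
Hypothesis x0_inside : sqnorm x0 < T ^ 2.
Hypothesis x0_support : forall i, (K <= i)%nat -> x0 i = 0.
Hypothesis K_ge : (n <= K)%nat.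

Fixpoint greedy (k : nat) : nat -> R :=
  match k with
  | O => x0
  | S k => upd (greedy k) (K + k) (1 / INR (next_index (greedy k) (K + k)))
  end.

Lemma greedy_invariant k : U (greedy k) /\ sqnorm (greedy k) < T ^ 2 /\
  forall i, (K + k <= i)%nat -> greedy k i = 0.
Proof.
  induction k as [|k [HU [Hs Hz]]].
  - split; [auto|split; [auto|]]. intros i Hi; apply x0_support; lia.
  - destruct (next_index_spec (greedy k) (K + k) HU Hs (Hz _ (le_n _)) ltac:(lia))
      as [[HN [Hgap HU']] _].
    simpl. set (N := next_index (greedy k) (K + k)) in *.
    split; [exact HU'|split].
    + pose proof (U_off_sphere _ HU').
      rewrite sqnorm_upd in * by (apply U_sqsummable, HU || apply Hz; lia). lra.
    + intros i Hi; unfold upd; destruct (Nat.eq_dec i (K + k)); [lia|]. apply Hz; lia.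
Qed.

Lemma greedy_least k : least_admissible (greedy k) (K + k) (next_index (greedy k) (K + k)).
Proof.
  destruct (greedy_invariant k) as [HU [Hs Hz]].
  apply next_index_spec; [exact HU|exact Hs|apply Hz; lia|lia].
Qed.

Definition coef (k : nat) : R := 1 / INR (next_index (greedy k) (K + k)).

Definition greedy_limit (i : nat) : R := if Nat.ltb i K then x0 i else coef (i - K).

Lemma greedy_trunc k : greedy k = trunc (K + k) greedy_limit.
Proof.
  induction k.
  - apply functional_extensionality; intros i; unfold trunc, greedy_limit; simpl.
    destruct (Nat.ltb_spec i K); destruct (Nat.ltb_spec i (K + 0)); try lia; auto.
  - change (greedy (S k)) with (upd (greedy k) (K + k) (coef k)). rewrite IHk.
    apply functional_extensionality; intros i; unfold upd, trunc, greedy_limit.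
    destruct (Nat.eq_dec i (K + k)) as [->|Hne].
    + destruct (Nat.ltb_spec (K + k) K); [lia|].
      destruct (Nat.ltb_spec (K + k) (K + S k)); [|lia]. f_equal; lia.
    + destruct (Nat.ltb_spec i (K + k)); destruct (Nat.ltb_spec i (K + S k)); auto; lia.
Qed.

Lemma greedy_limit_sqnorm : sqsummable greedy_limit /\ sqnorm greedy_limit <= T ^ 2.
Proof.
  assert (Hb : forall m, psum (fun i => greedy_limit i ^ 2) m <= T ^ 2).
  { intros m. apply Rle_trans with (psum (fun i => greedy_limit i ^ 2) (K + m)).
    - apply psum_incr; [intros; apply pow2_ge_0|lia].
    - rewrite <- sqnorm_trunc, <- greedy_trunc. left; apply (greedy_invariant m). }
  destruct (is_sum_of_bounded _ _ (fun i => pow2_ge_0 (greedy_limit i)) Hb) as [l Hl].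
  assert (Hs : sqsummable greedy_limit) by (apply sqsummable_is_sum; eauto).
  split; [exact Hs|]. rewrite (sqnorm_unique _ _ Hl). exact (is_sum_le_bound _ _ _ Hl Hb).
Qed.

Lemma coef_pos k : 0 < coef k.
Proof. apply inv_INR_pos, (greedy_least k). Qed.

Lemma greedy_limit_tail : Ec_tail n greedy_limit.
Proof.
  destruct (U_tail x0 x0_in) as [[HS _] Hz].
  split; [split|].
  - intros i; unfold greedy_limit; destruct (Nat.ltb_spec i K); [auto|].
    apply Sset_inv, (greedy_least (i - K)).
  - apply greedy_limit_sqnorm.
  - intros i Hi; unfold greedy_limit; destruct (Nat.ltb_spec i K); [auto|lia].
Qed.

Lemma greedy_limit_in_U : U greedy_limit.
Proof.
  apply NNPP; intros Hn.
  destruct (U_closed _ (conj greedy_limit_tail Hn)) as [eps [He Heps]].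
  destruct (trunc_cv _ (proj1 greedy_limit_sqnorm) eps He) as [m Hm].
  destruct (greedy_invariant m) as [HU _].
  apply (Heps (greedy m)); [apply U_tail, HU| |exact HU].
  rewrite greedy_trunc, l2dist_sym. apply Hm; lia.
Qed.

Lemma coef_small d : 0 < d -> exists k0, forall k, (k0 <= k)%nat -> coef k < d.
Proof.
  intros Hd.
  destruct (is_sum_cv0 _ _ (sqnorm_is_sum _ (proj1 greedy_limit_sqnorm)) (d ^ 2))
    as [k0 Hk0]; [apply pow_lt; lra|].
  exists k0; intros k Hk. specialize (Hk0 (K + k)%nat ltac:(lia)).
  unfold Rdist, greedy_limit in Hk0. destruct (Nat.ltb_spec (K + k) K); [lia|].
  replace (K + k - K)%nat with k in Hk0 by lia.
  pose proof (coef_pos k). rewrite Rminus_0_r, Rabs_right in Hk0 by (apply Rle_ge, pow2_ge_0).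
  simpl in Hk0; nra.
Qed.

Lemma next_index_ge2 k : coef k < 1 -> (2 <= next_index (greedy k) (K + k))%nat.
Proof.
  unfold coef; intros Hc. destruct (greedy_least k) as [[HN _] _].
  destruct (Nat.eq_dec (next_index (greedy k) (K + k)) 1) as [E|E]; [|lia].
  rewrite E in Hc; simpl in Hc; lra.
Qed.

(* Decreasing the last index by one moves the new point by at most [2 * coef k], so for large [k]
   it stays in the neighbourhood of the limit contained in U. *)
Lemma pred_index_in_U : exists k0, forall k, (k0 <= k)%nat ->
  U (upd (greedy k) (K + k) (1 / INR (next_index (greedy k) (K + k) - 1))).
Proof.
  destruct (U_open _ greedy_limit_in_U) as [eps [He Heps]].
  destruct (trunc_cv _ (proj1 greedy_limit_sqnorm) (eps / 2)) as [m Hm]; [lra|].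
  destruct (coef_small (Rmin 1 (eps / 4))) as [k1 Hk1]; [apply Rmin_glb_lt; lra|].
  exists (m + k1)%nat; intros k Hk. specialize (Hk1 k ltac:(lia)).
  pose proof (Rmin_l 1 (eps / 4)); pose proof (Rmin_r 1 (eps / 4)).
  pose proof (next_index_ge2 k ltac:(lra)) as HN.
  destruct (greedy_invariant k) as [HU _].
  assert (Hs : sqsummable (greedy k)) by (apply U_sqsummable, HU).
  apply Heps; [apply Ec_tail_upd; [apply U_tail, HU|apply Sset_inv; lia|lia]|].
  eapply Rle_lt_trans;
    [apply (l2dist_triangle _ (greedy (S k)));
       [apply greedy_limit_sqnorm|apply sqsummable_upd, Hs|apply sqsummable_upd, Hs]|].
  assert (H1 : l2dist greedy_limit (greedy (S k)) < eps / 2)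
    by (rewrite greedy_trunc, l2dist_sym; apply Hm; lia).
  simpl in H1 |- *; rewrite l2dist_upd.
  pose proof (coef_pos k). unfold coef in *.
  set (N := next_index (greedy k) (K + k)) in *.
  pose proof (inv_INR_pred_le N HN). pose proof (inv_INR_le (N - 1) N ltac:(lia) ltac:(lia)).
  rewrite Rabs_left1 by lra. lra.
Qed.

(* Otherwise [N_k - 1] would be admissible for large [k], against minimality: the gap to the
   sphere stays above [T^2 - sqnorm greedy_limit] while [(1 / (N_k - 1))^2 <= 4 coef_k^2 -> 0]. *)
Lemma greedy_limit_on_sphere : sqnorm greedy_limit = T ^ 2.
Proof.
  destruct greedy_limit_sqnorm as [Hs Hle]. destruct Hle as [Hlt|]; [exfalso|assumption].
  set (gap := T ^ 2 - sqnorm greedy_limit).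
  destruct pred_index_in_U as [k0 Hk0].
  destruct (coef_small (Rmin 1 (gap / 4))) as [k1 Hk1]; [apply Rmin_glb_lt; unfold gap; lra|].
  set (k := (k0 + k1)%nat). specialize (Hk1 k ltac:(unfold k; lia)).
  specialize (Hk0 k ltac:(unfold k; lia)).
  pose proof (Rmin_l 1 (gap / 4)); pose proof (Rmin_r 1 (gap / 4)).
  pose proof (next_index_ge2 k ltac:(lra)) as HN.
  assert (Hk : sqnorm (greedy k) <= sqnorm greedy_limit)
    by (rewrite greedy_trunc; apply sqnorm_trunc_le, Hs).
  destruct (greedy_least k) as [_ Hmin]. unfold coef in Hk1.
  revert Hk0 Hk1 HN Hmin. generalize (next_index (greedy k) (K + k)); intros N Hk0 Hk1 HN Hmin.
  apply (Hmin (N - 1)%nat ltac:(lia)). split; [lia|split].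
  - pose proof (inv_INR_pred_le _ HN). pose proof (inv_INR_pos N ltac:(lia)).
    pose proof (inv_INR_pos (N - 1) ltac:(lia)).
    assert ((1 / INR (N - 1)) ^ 2 <= 4 * (1 / INR N) * (1 / INR N)) by (simpl; nra).
    assert (4 * (1 / INR N) * (1 / INR N) < gap) by nra.
    unfold gap in *; lra.
  - exact Hk0.
Qed.

Lemma greedy_contradiction : False.
Proof. exact (U_off_sphere _ greedy_limit_in_U greedy_limit_on_sphere). Qed.

End Greedy.

Lemma tail_clopen_meets_sphere n V x T : tail_clopen n V -> Ec_tail n x -> V x ->
  l2norm x < T -> exists y, Ec_tail n y /\ V y /\ l2norm y = T.
Proof.
  intros [HVo HVc] Hx HVx HxT. apply NNPP; intros Hno.
  assert (Hsx : sqsummable x) by apply Hx.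
  pose proof (sqnorm_nonneg x Hsx); pose proof (sqrt_pos (sqnorm x)).
  assert (HxT2 : sqnorm x < T ^ 2).
  { rewrite <- (sqrt_sqrt (sqnorm x)) by auto. unfold l2norm in HxT; simpl; nra. }
  destruct (HVo x (conj Hx HVx)) as [eps [He Heps]].
  destruct (trunc_cv x Hsx eps He) as [m Hm].
  apply (greedy_contradiction n (fun y => Ec_tail n y /\ V y) T) with
    (x0 := trunc (m + n) x) (K := (m + n)%nat).
  - intros y [Hy _]; exact Hy.
  - exact HVo.
  - eapply tail_open_ext; [|exact HVc]. intros z; tauto.
  - intros y [Hy HVy] E. apply Hno. exists y; split; [exact Hy|split; [exact HVy|]].
    unfold l2norm in *; rewrite E. apply sqrt_pow2; lra.
  - apply Heps; [apply Ec_tail_trunc, Hx|rewrite l2dist_sym; apply Hm; lia].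
  - eapply Rle_lt_trans; [apply sqnorm_trunc_le, Hsx|exact HxT2].
  - intros i Hi; apply trunc_zero, Hi.
  - lia.
Qed.

Lemma Rabs_sin_sub_le a b : Rabs (sin a - sin b) <= Rabs (a - b).
Proof.
  destruct (MVT_abs sin cos b a) as [c [Hc _]]; [intros c _; apply derivable_pt_lim_sin|].
  rewrite Hc. pose proof (COS_bound c). pose proof (Rabs_pos (a - b)).
  assert (Rabs (cos c) <= 1) by (apply Rabs_le; lra). nra.
Qed.

Lemma fmap_Pcar x : Ec x -> Pcar (fmap x).
Proof. intros [HS _]; split; [exact HS|]. simpl. pose proof (SIN_bound (l2norm x)); lra. Qed.

Lemma fmap_continuous : continuous_on Ec Ec_open P_open fmap.
Proof.
  intros W [HWs HW]. split; [intros x [Hx _]; exact Hx|].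
  intros x [Hx HWx]. destruct (HW _ HWx) as [n [eps [He Heps]]].
  exists eps; split; [exact He|]. intros y Hy Hd. split; [exact Hy|]. apply Heps.
  - apply fmap_Pcar, Hy.
  - intros i Hi; simpl. rewrite l2dist_sym in Hd.
    eapply Rle_lt_trans; [apply Rabs_coord_sub_le; [apply Hy|apply Hx]|exact Hd].
  - simpl. replace ((1 + sin (l2norm y)) / 2 - (1 + sin (l2norm x)) / 2)
      with ((sin (l2norm y) - sin (l2norm x)) / 2) by field.
    pose proof (Rabs_sin_sub_le (l2norm y) (l2norm x)).
    pose proof (Rabs_l2norm_sub_le y x (proj2 Hy) (proj2 Hx)). rewrite l2dist_sym in H0.
    unfold Rdiv; rewrite Rabs_mult, (Rabs_right (/ 2)) by lra. lra.
Qed.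

Lemma fmap_injective x y : fmap x = fmap y -> x = y.
Proof. intros H; exact (f_equal fst H). Qed.

Lemma fmap_Yset x : Ec x -> Yset (fmap x).
Proof. intros H; exists x; auto. Qed.

Lemma Yset_Pcar q : Yset q -> Pcar q.
Proof. intros [x [Hx <-]]; apply fmap_Pcar, Hx. Qed.

Lemma P_open_ext W W' : (forall q, W q <-> W' q) -> P_open W' -> P_open W.
Proof.
  intros E [Hs HW]; split; [intros q Hq; apply Hs, E, Hq|].
  intros p Hp. destruct (HW p (proj1 (E p) Hp)) as [n [eps [He Heps]]].
  exists n, eps; split; [exact He|]. intros q Hq Hc Hd; apply E, Heps; auto.
Qed.

Lemma Y_open_trace W : P_open W -> Y_open (fun q => Yset q /\ W q).
Proof. intros HW; split; [intros q [Hq _]; exact Hq|exists W; split; tauto]. Qed.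

Lemma Y_clopen_trace W : P_open W -> P_open (fun q => Pcar q /\ ~ W q) ->
  clopen Yset Y_open (fun q => Yset q /\ W q).
Proof.
  intros HW HWc; split; [apply Y_open_trace, HW|].
  split; [intros q [Hq _]; exact Hq|]. exists (fun q => Pcar q /\ ~ W q); split; [exact HWc|].
  intros q; pose proof (Yset_Pcar q); tauto.
Qed.

Lemma coord_lt_open i m : P_open (fun q => Pcar q /\ fst q i < 1 / INR m).
Proof.
  split; [intros q [Hq _]; exact Hq|]. intros q [Hq Hlt].
  exists (S i), (1 / INR m - fst q i); split; [lra|].
  intros q' Hq' Hc _; split; [exact Hq'|]. specialize (Hc i ltac:(lia)).
  apply Rabs_def2 in Hc; lra.
Qed.

(* Away from 0 the set S is discrete: a point [1/k] is isolated by the gap [1/k - 1/(k+1)]. *)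
Lemma coord_ge_open i m : (1 <= m)%nat -> P_open (fun q => Pcar q /\ ~ fst q i < 1 / INR m).
Proof.
  intros Hm. split; [intros q [Hq _]; exact Hq|]. intros q [Hq Hge].
  pose proof (inv_INR_pos m Hm).
  destruct (proj1 Hq i) as [E|[k [Hk E]]]; [rewrite E in Hge; lra|].
  assert (Hkm : (k <= m)%nat).
  { destruct (Compare_dec.le_lt_dec k m) as [|Hlt]; [assumption|exfalso; apply Hge; rewrite E].
    pose proof (INR_ge1 m Hm). apply lt_INR in Hlt.
    unfold Rdiv; rewrite !Rmult_1_l; apply Rinv_lt_contravar; nra. }
  assert (Hgap : 1 / INR (S k) < 1 / INR k).
  { pose proof (INR_ge1 k Hk). rewrite S_INR.
    unfold Rdiv; rewrite !Rmult_1_l; apply Rinv_lt_contravar; nra. }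
  exists (S i), (1 / INR k - 1 / INR (S k)); split; [lra|].
  intros q' Hq' Hc _; split; [exact Hq'|]. specialize (Hc i ltac:(lia)). rewrite E in Hc.
  apply Rabs_def2 in Hc. pose proof (inv_INR_le k m Hk Hkm).
  destruct (proj1 Hq' i) as [E'|[j [Hj E']]]; rewrite E' in *.
  - pose proof (inv_INR_pos (S k) ltac:(lia)); lra.
  - assert (Hjk : (j <= k)%nat).
    { destruct (Compare_dec.le_lt_dec j k) as [|Hlt]; [assumption|].
      pose proof (inv_INR_le (S k) j ltac:(lia) Hlt); lra. }
    pose proof (inv_INR_le j k Hj Hjk); lra.
Qed.

Lemma totally_disconnected_of_separation {X} (A : X -> Prop) (O : (X -> Prop) -> Prop) :
  (forall x y, A x -> A y -> (forall C, clopen A O C -> C x -> C y) -> y = x) ->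
  totally_disconnected A O.
Proof.
  intros H x Hx. exists (fun C => clopen A O C /\ C x). split; [tauto|].
  intros y; split.
  - intros ->; split; [exact Hx|tauto].
  - intros [Hy HC]. apply H; auto. intros C HCl HCx; apply HC; auto.
Qed.

Lemma Y_totally_disconnected : totally_disconnected Yset Y_open.
Proof.
  apply totally_disconnected_of_separation. intros p q Hp Hq Hsep.
  destruct Hp as [x [Hx <-]], Hq as [y [Hy <-]]. f_equal.
  apply functional_extensionality; intros i.
  apply Sset_eq_of_thresholds; [apply Hy|apply Hx|]. intros m Hm.
  pose proof (coord_lt_open i m) as Hlt; pose proof (coord_ge_open i m Hm) as Hge.
  split; intros H.
  - apply NNPP; intros Hn.
    refine (proj2 (proj2 (Hsep _ (Y_clopen_trace _ Hge _)
                             (conj (fmap_Yset x Hx) (conj (fmap_Pcar x Hx) Hn)))) H).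
    eapply P_open_ext; [|exact Hlt]. intros q; split; [intros [Hq Hq']; split; [exact Hq|]|]; tauto.
  - refine (proj2 (proj2 (Hsep _ (Y_clopen_trace _ Hlt _)
                             (conj (fmap_Yset x Hx) (conj (fmap_Pcar x Hx) H))))).
    eapply P_open_ext; [|exact Hge]. intros q; tauto.
Qed.

Lemma Y_open_preimage n V : Y_open V -> tail_open n (fun z => Ec_tail n z /\ V (fmap z)).
Proof.
  intros [HVs [W [HW HV]]] y [Hy HVy].
  destruct (proj2 (fmap_continuous W HW) y (conj (proj1 Hy) (proj2 (proj1 (HV _) HVy))))
    as [eps [He Heps]].
  exists eps; split; [exact He|]. intros z Hz Hd; split; [exact Hz|].
  apply HV; split; [apply fmap_Yset, Hz|]. apply (Heps z (proj1 Hz) Hd).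
Qed.

Lemma Y_clopen_preimage n C : clopen Yset Y_open C -> tail_clopen n (fun z => C (fmap z)).
Proof.
  intros [HC HCc]; split; [apply Y_open_preimage, HC|].
  eapply tail_open_ext; [|apply (Y_open_preimage n _ HCc)].
  intros z; split; intros [Hz HnC]; split; auto.
  - split; [apply fmap_Yset, Hz|exact HnC].
  - apply HnC.
Qed.

Lemma Y_clopen_meets_sin_level C T0 : clopen Yset Y_open C -> (exists q, C q) ->
  exists z, Ec z /\ C (fmap z) /\ sin (l2norm z) = sin T0.
Proof.
  intros HC [q Hq].
  destruct (proj1 (proj1 HC) q Hq) as [x [Hx <-]].
  destruct (INR_archimed (2 * PI) (l2norm x - T0)) as [m Hm]; [pose proof PI_RGT_0; lra|].
  destruct (tail_clopen_meets_sphere 0 _ x (T0 + 2 * INR m * PI) (Y_clopen_preimage 0 C HC))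
    as [z [Hz [HCz Hzn]]]; [split; [exact Hx|intros; lia]|exact Hq|lra|].
  exists z; split; [apply Hz|split; [exact HCz|]]. rewrite Hzn; apply sin_period.
Qed.

Lemma neighborhood_trace p W : Yset p -> P_open W -> W p ->
  neighborhood Yset Y_open p (fun q => Yset q /\ W q).
Proof.
  intros Hp HW HWp; split; [intros q [Hq _]; exact Hq|].
  exists (fun q => Yset q /\ W q); split; [apply Y_open_trace, HW|split; [auto|intros q Hq; exact Hq]].
Qed.

Lemma snd_lt1_open : P_open (fun q => Pcar q /\ snd q < 1).
Proof.
  split; [intros q [Hq _]; exact Hq|]. intros q [Hq Hlt]. exists O, (1 - snd q); split; [lra|].
  intros q' Hq' _ Hd; split; [exact Hq'|]. apply Rabs_def2 in Hd; lra.
Qed.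

Lemma snd_gt0_open : P_open (fun q => Pcar q /\ 0 < snd q).
Proof.
  split; [intros q [Hq _]; exact Hq|]. intros q [Hq Hlt]. exists O, (snd q); split; [lra|].
  intros q' Hq' _ Hd; split; [exact Hq'|]. apply Rabs_def2 in Hd; lra.
Qed.

Lemma Y_cohesive : cohesive Yset Y_open.
Proof.
  intros p [x [Hx <-]].
  destruct (Rlt_or_le (sin (l2norm x)) 1) as [Hs|Hs].
  - exists (fun q => Yset q /\ (Pcar q /\ snd q < 1)).
    split; [apply neighborhood_trace; [apply fmap_Yset, Hx|apply snd_lt1_open|]|].
    + split; [apply fmap_Pcar, Hx|simpl; lra].
    + intros C HC Hne Hsub. destruct (Y_clopen_meets_sin_level C (PI / 2) HC Hne) as [z [_ [HCz Hz]]].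
      destruct (Hsub _ HCz) as [_ [_ Hlt]]. simpl in Hlt. rewrite Hz, sin_PI2 in Hlt. lra.
  - exists (fun q => Yset q /\ (Pcar q /\ 0 < snd q)).
    split; [apply neighborhood_trace; [apply fmap_Yset, Hx|apply snd_gt0_open|]|].
    + split; [apply fmap_Pcar, Hx|simpl; pose proof (SIN_bound (l2norm x)); lra].
    + intros C HC Hne Hsub. destruct (Y_clopen_meets_sin_level C (3 * (PI / 2)) HC Hne) as [z [_ [HCz Hz]]].
      destruct (Hsub _ HCz) as [_ [_ Hgt]]. simpl in Hgt. rewrite Hz, sin_3PI2 in Hgt. lra.
Qed.

Lemma neighborhood_contains_level N : neighborhood Yset Y_open (fmap (fun _ => 0)) N ->
  exists n, forall z, Ec_tail n z -> sin (l2norm z) = 0 -> N (fmap z).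
Proof.
  intros [_ [U0 [[_ [W [HW HU0]]] [HU0p HU0N]]]].
  destruct (proj2 HW _ (proj2 (proj1 (HU0 _) HU0p))) as [n [eps [He Heps]]].
  exists n; intros z Hz Hs. apply HU0N, HU0; split; [apply fmap_Yset, Hz|].
  apply Heps; [apply fmap_Pcar, Hz| |]; simpl.
  - intros i Hi. rewrite (proj2 Hz i Hi), Rminus_0_r, Rabs_R0; exact He.
  - rewrite Hs, l2norm_zero, sin_0, Rminus_diag, Rabs_R0; exact He.
Qed.

(* A clopen set of the intersection missing [fmap y] would, by [tail_clopen_meets_sphere],
   miss the image of a point of the sphere. *)
Lemma Cset_contains_ball_of_sphere n N T : Cset Yset Y_open N ->
  (forall z, Ec_tail n z -> l2norm z = T -> N (fmap z)) ->
  forall y, Ec_tail n y -> l2norm y < T -> N (fmap y).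
Proof.
  intros [F [HF HN]] Hsphere y Hy HyT. apply HN. split; [apply fmap_Yset, Hy|].
  intros C HCF. apply NNPP; intros HnC.
  destruct (tail_clopen_meets_sphere n _ y T (tail_clopen_not n _ (Y_clopen_preimage n C (HF C HCF))))
    as [z [Hz [HnCz Hzn]]]; [exact Hy|exact HnC|exact HyT|].
  apply HnCz, (proj1 (HN _) (Hsphere z Hz Hzn)), HCF.
Qed.

Lemma Y_not_almost_zero_dimensional : ~ almost_zero_dimensional Yset Y_open.
Proof.
  intros H. set (o := fun _ : nat => 0).
  destruct (H (fmap o) (fmap_Yset o Ec_zero) _ (Y_open_trace _ snd_lt1_open))
    as [N [HNnb [HNC HNU]]].
  { split; [apply fmap_Yset, Ec_zero|split; [apply fmap_Pcar, Ec_zero|]].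
    simpl; unfold o; rewrite l2norm_zero, sin_0; lra. }
  destruct (neighborhood_contains_level N HNnb) as [n Hlevel].
  assert (Hball : forall y, Ec_tail n y -> l2norm y < PI -> N (fmap y)).
  { apply Cset_contains_ball_of_sphere; [exact HNC|]. intros z Hz Hzn.
    apply Hlevel; [exact Hz|rewrite Hzn; apply sin_PI]. }
  destruct (tail_clopen_meets_sphere n _ o (PI / 2) (tail_clopen_True n))
    as [y [Hy [_ Hyn]]]; [apply Ec_tail_zero|auto|unfold o; rewrite l2norm_zero; pose proof PI_RGT_0; lra|].
  destruct (HNU _ (Hball y Hy ltac:(rewrite Hyn; pose proof PI_RGT_0; lra))) as [_ [_ Hlt]].
  simpl in Hlt. rewrite Hyn, sin_PI2 in Hlt. lra.
Qed.

Theorem mainTheorem4 :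
  (forall x, Ec x -> Pcar (fmap x)) /\
  continuous_on Ec Ec_open P_open fmap /\
  (forall x y, Ec x -> Ec y -> fmap x = fmap y -> x = y) /\
  totally_disconnected Yset Y_open /\
  cohesive Yset Y_open /\
  ~ almost_zero_dimensional Yset Y_open.
Proof.
  split; [exact fmap_Pcar|].
  split; [exact fmap_continuous|].
  split; [intros x y _ _; apply fmap_injective|].
  split; [exact Y_totally_disconnected|].
  split; [exact Y_cohesive|exact Y_not_almost_zero_dimensional].
Qed.
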